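(* Let $X$ be a compact space and let $E$ be an equivalence relation on $X$. If $E$ has an equivalence class which is not closed, then $E$ does not have any closed graphing of finite diameter.
   Context: A graphing of $E$ is a simple undirected graph $G\subseteq X\times X$ whose connectedness relation (connected by a finite path) equals $E$; it is closed if $G$ is closed in $X\times X$. $G$ has finite diameter $k$ if $k$ is the least integer such that any two $G$-connected points are joined by a path of length at most $k$. Spaces are recursive Polish spaces. *)

From HB Require Import structures.
From mathcomp Require Import all_boot all_order all_algebra.
From mathcomp Require Import all_classical all_reals topology normedtype.
Set Implicit Arguments. Unset Strict Implicit. Unset Printing Implicit Defensive.
Import Order.TTheory GRing.Theory Num.Theory.
Local Open Scope classical_set_scope.

Definition simple_graph (T : Type) (G : set (T * T)) : Prop :=
  (forall x y, G (x, y) -> G (y, x)) /\ (forall x, ~ G (x, x)).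

Fixpoint gpath (T : Type) (G : set (T * T)) (n : nat) (x y : T) : Prop :=
  match n with
  | 0 => x = y
  | n'.+1 => exists z, G (x, z) /\ gpath G n' z y
  end.

Definition gconnected (T : Type) (G : set (T * T)) (x y : T) : Prop :=
  exists n, gpath G n x y.

Definition graphing (T : Type) (E : T -> T -> Prop) (G : set (T * T)) : Prop :=
  simple_graph G /\ (forall x y, gconnected G x y <-> E x y).

Definition diameter_bound (T : Type) (G : set (T * T)) (k : nat) : Prop :=
  forall x y, gconnected G x y -> exists n, (n <= k)%N /\ gpath G n x y.

Definition has_diameter (T : Type) (G : set (T * T)) (k : nat) : Prop :=
  diameter_bound G k /\ (forall j, diameter_bound G j -> (k <= j)%N).

Definition finite_diameter (T : Type) (G : set (T * T)) : Prop :=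
  exists k, has_diameter G k.

Definition equiv_relation (T : Type) (E : T -> T -> Prop) : Prop :=
  (forall x, E x x) /\ (forall x y, E x y -> E y x) /\
  (forall x y z, E x y -> E y z -> E x z).

From HB Require Import structures.
From mathcomp Require Import all_boot all_order all_algebra.
From mathcomp Require Import all_classical all_reals topology normedtype.
Local Open Scope classical_set_scope.

(* If G is closed in the compact Hausdorff square of X, the set S_n of points
   joined to x by a G-path of length exactly n is closed for every n: S_0 is a
   point, and S_{n+1} is the projection of the closed set G ∩ (X × S_n), while
   projections along a compact factor are closed.  So G-balls of finite radius
   are closed, and a graphing of diameter at most k makes every E-class such a
   ball. *)

Lemma closed_fst_image (T U : topologicalType) (C : set (T * U)) :
  hausdorff_space T -> compact [set: T] -> compact [set: U] ->
  closed C -> closed (fst @` C).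
Proof.
move=> T_hausdorff T_compact U_compact C_closed.
apply: (compact_closed T_hausdorff).
apply: continuous_compact.
  by apply: continuous_subspaceT => p; exact: cvg_fst.
apply: (subclosed_compact C_closed (compact_setX T_compact U_compact)).
by move=> p _.
Qed.

Definition gball {T : Type} (G : set (T * T)) (k : nat) (x : T) : set T :=
  \bigcup_(n in `I_k.+1) [set y | gpath G n y x].

Section ClosedGraphBalls.
Variables (T : topologicalType) (G : set (T * T)).
Hypotheses (T_hausdorff : hausdorff_space T) (T_compact : compact [set: T]).
Hypothesis G_closed : closed G.

Lemma gpathS_fst_image (n : nat) (x : T) :
  [set y | gpath G n.+1 y x] = fst @` (G `&` snd @^-1` [set y | gpath G n y x]).
Proof.
apply/seteqP; split=> [y /= [z [Gyz Pz]]|y [[a b] [Gab Pb]] <-].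
  by exists (y, z).
by exists b.
Qed.

Lemma closed_gpath_to (n : nat) (x : T) : closed [set y | gpath G n y x].
Proof.
elim: n => [|n IHn].
  exact: (accessible_closed_set1 (hausdorff_accessible T_hausdorff)).
rewrite gpathS_fst_image.
apply: closed_fst_image => //.
by apply: closedI => //; apply: preimage_closed => // p _; exact: cvg_snd.
Qed.

Lemma closed_gball (k : nat) (x : T) : closed (gball G k x).
Proof.
by apply: closed_bigcup => [|n _]; [exact: finite_II | exact: closed_gpath_to].
Qed.

End ClosedGraphBalls.

Lemma equiv_class_gball {T : Type} {E : T -> T -> Prop} {G : set (T * T)}
    {k : nat} (x : T) :
  equiv_relation E -> graphing E G -> diameter_bound G k ->
  [set y | E x y] = gball G k x.
Proof.
move=> [_ [E_sym _]] [_ G_E] G_k.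
apply/seteqP; split=> [y /E_sym /G_E /G_k [n [n_le_k y_x]]|y [n /= n_lt_k y_x]].
  by exists n.
by apply/E_sym/G_E; exists n.
Qed.

Theorem theorem3p5 (R : realType) (X : pseudoMetricType R)
  (HX : hausdorff_space X) (Hc : compact [set: X])
  (E : X -> X -> Prop) (HE : equiv_relation E) :
  (exists x : X, ~ closed [set y | E x y]) ->
  ~ (exists G : set (X * X), graphing E G /\ closed G /\ finite_diameter G).
Proof.
move=> [x class_not_closed] [G [G_E [G_closed [k [G_k _]]]]].
apply: class_not_closed.
rewrite (equiv_class_gball x HE G_E G_k).
exact: closed_gball.
Qed.
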